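(* For every $n \geq 3$, the set $\{D_n\}$ is equidistributed.
   Context: A linear arrangement of $\{1,\ldots,n\}$ is a sequence $a_1\cdots a_n$ in which each of $1,\ldots,n$ appears exactly once. It contains the pattern $ij$ if $a_t=i$ and $a_{t+1}=j$ for some $t$; otherwise it avoids it. $\{D_n\}$ is the set of linear arrangements of $\{1,\ldots,n\}$ avoiding all of the patterns $12, 23, \ldots, (n-1)n, n1$. For a set $X$ of linear arrangements of $\{1,\ldots,n\}$ and $i\in\{1,\ldots,n\}$, the class $X^{(i)}$ is the set of arrangements in $X$ whose first entry is $i$. $X$ is called equidistributed if it is partitioned into its nonempty classes and all nonempty classes $X^{(i)}$ have the same cardinality. *)

From mathcomp Require Import all_boot all_fingroup.
Set Implicit Arguments. Unset Strict Implicit. Unset Printing Implicit Defensive.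

(* A linear arrangement a_1 ... a_n of {1,...,n} is encoded as a permutation
   s : {perm 'I_n}, with a_{t+1} = (s t) + 1 (positions and values shifted
   down by one, so both range over {0,...,n-1}). *)

Definition contains_pattern n (s : {perm 'I_n}) (i j : nat) : bool :=
  [exists t : 'I_n, exists u : 'I_n,
     [&& val u == (val t).+1, val (s t) == i & val (s u) == j]].

(* D_n : arrangements avoiding 12, 23, ..., (n-1)n, n1;
   in 0-based values: avoid (k, (k+1) mod n) for every k < n *)
Definition Dn n : {set {perm 'I_n}} :=
  [set s | [forall k : 'I_n, ~~ contains_pattern s k (k.+1 %% n)]].

Definition arr_class n (X : {set {perm 'I_n}}) (i : nat) : {set {perm 'I_n}} :=
  [set s in X | [exists t : 'I_n, (val t == 0) && (val (s t) == i)]].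

Definition equidistributed n (X : {set {perm 'I_n}}) : Prop :=
  forall i j : 'I_n, arr_class X i != set0 -> arr_class X j != set0 ->
    #|arr_class X i| = #|arr_class X j|.

From mathcomp Require Import all_boot all_fingroup.
Set Implicit Arguments. Unset Strict Implicit. Unset Printing Implicit Defensive.

(* The forbidden patterns k(k+1) are the adjacencies of the n-cycle, so adding
   1 (mod n) to every entry maps D_n bijectively onto itself and the class of
   arrangements starting with i onto the class starting with i+1.  Hence all
   classes have the same size, for every n. *)

Lemma ordS_invariant_const n T (f : 'I_n -> T) :
  (forall i, f (ordS i) = f i) -> forall i j, f i = f j.
Proof.
case: n f => [|m] f fS i j; first by case: i.
suff f_ord0 (k : 'I_m.+1) : f k = f ord0 by rewrite !f_ord0.
case: k => k; elim: k => [|k IHk] lt_k; first by congr f; apply: val_inj.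
rewrite -(IHk (ltnW lt_k)) -[RHS]fS; congr f; apply: val_inj.
by rewrite /= modn_small.
Qed.

Section ValueRotation.
Variable n : nat.

Definition rot : {perm 'I_n} := perm (@ordS_inj n).

Lemma rotE x : rot x = ordS x.
Proof. by rewrite permE. Qed.

Lemma eq_val_ordS (x y : 'I_n) : (val (ordS x) == val (ordS y)) = (val x == val y).
Proof. by rewrite !val_eqE (inj_eq (@ordS_inj n)). Qed.

Lemma contains_pattern_rot s (a b : 'I_n) :
  contains_pattern (s * rot)%g (ordS a) (ordS b) = contains_pattern s a b.
Proof.
apply/existsP/existsP => -[t /existsP [u tu]]; exists t; apply/existsP; exists u;
  by rewrite !permM !rotE !eq_val_ordS in tu *.
Qed.

Lemma DnE : Dn n = [set s | [forall k : 'I_n, ~~ contains_pattern s k (ordS k)]].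
Proof. by []. Qed.

Lemma Dn_rot s : ((s * rot)%g \in Dn n) = (s \in Dn n).
Proof.
rewrite DnE !inE; apply/forallP/forallP => avoid k.
  by rewrite -contains_pattern_rot; apply: avoid (ordS k).
by rewrite -[k]ord_predK contains_pattern_rot; apply: avoid.
Qed.

Lemma arr_class_rot (i : 'I_n) :
  arr_class (Dn n) (ordS i) = (fun s => s * rot)%g @: arr_class (Dn n) i.
Proof.
have first_rot s : [exists t : 'I_n, (val t == 0) && (val ((s * rot)%g t) == ordS i)]
    = [exists t : 'I_n, (val t == 0) && (val (s t) == i)].
  by apply: eq_existsb => t; rewrite permM rotE eq_val_ordS.
apply/setP => s; rewrite -[s](mulgKV rot) (mem_imset _ _ (mulIg rot)).
by rewrite inE [RHS]inE Dn_rot first_rot.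
Qed.

Lemma card_arr_class_ordS (i : 'I_n) :
  #|arr_class (Dn n) (ordS i)| = #|arr_class (Dn n) i|.
Proof. by rewrite arr_class_rot card_imset //; apply: mulIg. Qed.

End ValueRotation.

Theorem proposition4p3 (n : nat) : 3 <= n -> equidistributed (Dn n).
Proof.
move=> _ i j _ _.
exact: (@ordS_invariant_const n _ (fun k => #|arr_class (Dn n) k|)
         (@card_arr_class_ordS n)).
Qed.
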